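(* For all integers $a,b,c,d,e$: $$(F_{d-a}F_{e-b}-F_{e-a}F_{d-b})F_{b-c}=(F_{d-c}F_{e-b}-F_{e-c}F_{d-b})F_{b-a},$$ $$(J_{d-a}J_{e-b}-J_{e-a}J_{d-b})J_{b-c}=(J_{d-c}J_{e-b}-J_{e-c}J_{d-b})J_{b-a},$$ $$(P_{d-a}P_{e-b}-P_{e-a}P_{d-b})P_{b-c}=(P_{d-c}P_{e-b}-P_{e-c}P_{d-b})P_{b-a}.$$
   Context: All sequences are indexed by $n\in\mathbb Z$. Fibonacci numbers $F_n$: $F_n=F_{n-1}+F_{n-2}$ for all $n\in\mathbb Z$, $F_0=0,F_1=1$ (so $F_{-n}=(-1)^{n-1}F_n$). Jacobsthal numbers $J_n$: $J_n=J_{n-1}+2J_{n-2}$ for all $n\in\mathbb Z$, $J_0=0,J_1=1$ (so $J_{-n}=(-1)^{n-1}2^{-n}J_n$, rational for negative index). Pell numbers $P_n$: $P_n=2P_{n-1}+P_{n-2}$ for all $n\in\mathbb Z$, $P_0=0,P_1=1$ (so $P_{-n}=(-1)^{n-1}P_n$). *)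

(* sequences take real values (Jacobsthal numbers are rational
   at negative indices). *)
From Stdlib Require Import Reals ZArith Lra Lia.
Open Scope R_scope.

(* Two-sided sequence u with u_0 = 0, u_1 = 1 and u_n = p u_{n-1} + q u_{n-2}
   for all integers n (q <> 0, so the recurrence can be run backwards:
   u_{n-2} = (u_n - p u_{n-1}) / q). *)
Definition fwd (p q : R) (s : R * R) : R * R :=
  (snd s, p * snd s + q * fst s).
Definition bwd (p q : R) (s : R * R) : R * R :=
  ((snd s - p * fst s) / q, fst s).

Fixpoint iter_pair (f : R * R -> R * R) (n : nat) (s : R * R) : R * R :=
  match n with O => s | S k => f (iter_pair f k s) end.

Definition lucasU (p q : R) (n : Z) : R :=
  if (0 <=? n)%Z then fst (iter_pair (fwd p q) (Z.to_nat n) (0, 1))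
  else fst (iter_pair (bwd p q) (Z.to_nat (- n)) (0, 1)).

Definition Fib (n : Z) : R := lucasU 1 1 n.
Definition Jac (n : Z) : R := lucasU 1 2 n.
Definition Pell (n : Z) : R := lucasU 2 1 n.

Example Fib_m1 : Fib (-1) = 1.
Proof. unfold Fib, lucasU; simpl; field. Qed.
Example Jac_m2 : Jac (-2) = - 1/4.
Proof. unfold Jac, lucasU; simpl; field. Qed.
Example Pell_3 : Pell 3 = 5.
Proof. unfold Pell, lucasU; simpl; field. Qed.

(* Every two-sided sequence U with U_0 = 0, U_1 = 1 and U_{n+2} = p U_{n+1} + q U_n
   (q <> 0) satisfies the addition formula U_{m+n} = U_n U_{m+1} + q U_{n-1} U_m,
   since both sides satisfy the recurrence in n and agree at n = 0, 1.  Expanding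
   the four terms U_{d-a}, U_{e-a}, U_{d-c}, U_{e-c} around b with this formula
   turns the identity into a polynomial identity in U_{d-b}, U_{e-b}, U_{b-a},
   U_{b-c} and their neighbours. *)
From Stdlib Require Import Reals ZArith Lra Lia.
Open Scope R_scope.

Section LucasSequence.
Variables p q : R.
Hypothesis q_neq0 : q <> 0.

Definition lucas_recurrence (v : Z -> R) : Prop :=
  forall n, v (n + 2)%Z = p * v (n + 1)%Z + q * v n.

Lemma lucas_recurrence_unique (v w : Z -> R) :
  lucas_recurrence v -> lucas_recurrence w -> v 0%Z = w 0%Z -> v 1%Z = w 1%Z ->
  forall n, v n = w n.
Proof.
  intros Hv Hw H0 H1.
  assert (Hpair : forall n, v n = w n /\ v (n + 1)%Z = w (n + 1)%Z).
  { apply Z.peano_ind.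
    - split; assumption.
    - intros n [En En1]. split.
      + now replace (Z.succ n) with (n + 1)%Z by lia.
      + replace (Z.succ n + 1)%Z with (n + 2)%Z by lia.
        rewrite Hv, Hw, En, En1. reflexivity.
    - intros n [En En1]. split.
      + (* the recurrence runs backwards because q <> 0 *)
        apply (Rmult_eq_reg_l q); [|exact q_neq0].
        pose proof (Hv (Z.pred n)) as Rv. pose proof (Hw (Z.pred n)) as Rw.
        replace (Z.pred n + 2)%Z with (n + 1)%Z in Rv, Rw by lia.
        replace (Z.pred n + 1)%Z with n in Rv, Rw by lia.
        replace (q * v (Z.pred n)) with (v (n + 1)%Z - p * v n) by (rewrite Rv; ring).
        replace (q * w (Z.pred n)) with (w (n + 1)%Z - p * w n) by (rewrite Rw; ring).
        rewrite En, En1. reflexivity.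
      + now replace (Z.pred n + 1)%Z with n by lia. }
  intro n. apply Hpair.
Qed.

Notation U := (lucasU p q).

Lemma lucasU_of_nat (k : nat) : U (Z.of_nat k) = fst (iter_pair (fwd p q) k (0, 1)).
Proof.
  unfold lucasU. rewrite Nat2Z.id.
  replace (0 <=? Z.of_nat k)%Z with true by (symmetry; apply Z.leb_le; lia).
  reflexivity.
Qed.

Lemma lucasU_opp_of_nat (k : nat) :
  U (- Z.of_nat k) = fst (iter_pair (bwd p q) k (0, 1)).
Proof.
  unfold lucasU. destruct k as [|k]; [reflexivity|].
  replace (0 <=? - Z.of_nat (S k))%Z with false by (symmetry; apply Z.leb_gt; lia).
  rewrite Z.opp_involutive, Nat2Z.id. reflexivity.
Qed.

Lemma lucasU_0 : U 0 = 0.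
Proof. reflexivity. Qed.

Lemma lucasU_1 : U 1 = 1.
Proof. unfold lucasU. simpl. ring. Qed.

Lemma lucasU_m1 : U (-1) = / q.
Proof. unfold lucasU. simpl. field. exact q_neq0. Qed.

Lemma lucasU_recurrence : lucas_recurrence U.
Proof.
  intro n. destruct (Z_le_gt_dec 0 n) as [Hn|Hn].
  - destruct (Z_of_nat_complete n Hn) as [k ->].
    replace (Z.of_nat k + 2)%Z with (Z.of_nat (S (S k))) by lia.
    replace (Z.of_nat k + 1)%Z with (Z.of_nat (S k)) by lia.
    rewrite !lucasU_of_nat. reflexivity.
  - destruct (Z_of_nat_complete (- n - 1) ltac:(lia)) as [k Hk].
    replace n with (- Z.of_nat (S k))%Z by lia.
    replace (- Z.of_nat (S k) + 1)%Z with (- Z.of_nat k)%Z by lia.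
    assert (Hsnd : U (- Z.of_nat (S k) + 2)%Z = snd (iter_pair (bwd p q) k (0, 1))).
    { destruct k as [|k]; [reflexivity|].
      replace (- Z.of_nat (S (S k)) + 2)%Z with (- Z.of_nat k)%Z by lia.
      apply lucasU_opp_of_nat. }
    rewrite Hsnd, !lucasU_opp_of_nat. cbn [iter_pair].
    destruct (iter_pair (bwd p q) k (0, 1)) as [x y]. unfold bwd. simpl.
    field. exact q_neq0.
Qed.

Lemma lucasU_add (m n : Z) : U (m + n) = U n * U (m + 1) + q * U (n - 1) * U m.
Proof.
  revert n.
  apply (lucas_recurrence_unique (fun n => U (m + n))
           (fun n => U n * U (m + 1) + q * U (n - 1) * U m)).
  - intro n. replace (m + (n + 2))%Z with (m + n + 2)%Z by lia.
    replace (m + (n + 1))%Z with (m + n + 1)%Z by lia.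
    apply lucasU_recurrence.
  - intro n. rewrite (lucasU_recurrence n).
    replace (n + 2 - 1)%Z with (n - 1 + 2)%Z by lia.
    replace (n + 1 - 1)%Z with (n - 1 + 1)%Z by lia.
    rewrite (lucasU_recurrence (n - 1)%Z). ring.
  - cbv beta. change (0 - 1)%Z with (-1)%Z. rewrite Z.add_0_r, lucasU_0, lucasU_m1.
    field. exact q_neq0.
  - cbv beta. rewrite Z.sub_diag, lucasU_0, lucasU_1. ring.
Qed.

Lemma lucasU_five_index (a b c d e : Z) :
  (U (d - a) * U (e - b) - U (e - a) * U (d - b)) * U (b - c)
    = (U (d - c) * U (e - b) - U (e - c) * U (d - b)) * U (b - a).
Proof.
  replace (d - a)%Z with (d - b + (b - a))%Z by lia.
  replace (e - a)%Z with (e - b + (b - a))%Z by lia.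
  replace (d - c)%Z with (d - b + (b - c))%Z by lia.
  replace (e - c)%Z with (e - b + (b - c))%Z by lia.
  rewrite (lucasU_add (d - b) (b - a)), (lucasU_add (e - b) (b - a)),
    (lucasU_add (d - b) (b - c)), (lucasU_add (e - b) (b - c)).
  ring.
Qed.

End LucasSequence.

Theorem corollary2 (a b c d e : Z) :
  (Fib (d - a) * Fib (e - b) - Fib (e - a) * Fib (d - b)) * Fib (b - c)
    = (Fib (d - c) * Fib (e - b) - Fib (e - c) * Fib (d - b)) * Fib (b - a)
  /\
  (Jac (d - a) * Jac (e - b) - Jac (e - a) * Jac (d - b)) * Jac (b - c)
    = (Jac (d - c) * Jac (e - b) - Jac (e - c) * Jac (d - b)) * Jac (b - a)
  /\
  (Pell (d - a) * Pell (e - b) - Pell (e - a) * Pell (d - b)) * Pell (b - c)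
    = (Pell (d - c) * Pell (e - b) - Pell (e - c) * Pell (d - b)) * Pell (b - a).
Proof.
  unfold Fib, Jac, Pell.
  split; [|split]; apply lucasU_five_index; lra.
Qed.
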